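(* Let $G=(V,E,w)$ be a connected weighted graph with $n$ vertices and let $e\in E$. Then $$ n\cdot w_e\cdot B_e^{2}=\sum_{\{s,t\}\subseteq V}\frac{f_{st}(e)^{2}}{w_e}, $$ where the sum is over unordered pairs of distinct vertices.
   Context: $G=(V,E,w)$ is an undirected graph with positive edge weights $w_e$. Each edge is given an arbitrary fixed orientation $(s,t)$; the boundary matrix $\partial\in\mathbb{R}^{|V|\times|E|}$ has column $\partial 1_e=1_s-1_t$ for $e=(s,t)$, where $1_x$ is the indicator vector of $x$. $W$ is the diagonal matrix of edge weights and $L=\partial W\partial^{T}$ is the graph Laplacian; $L^{+}$ is its Moore–Penrose pseudoinverse and $L^{2+}=(L^{+})^2$. The $st$-electrical flow is $f_{st}=W\partial^{T}L^{+}(1_s-1_t)\in\mathbb{R}^{E}$. The biharmonic distance is $B_{st}=\sqrt{(1_s-1_t)^{T}L^{2+}(1_s-1_t)}$ and $B_e:=B_{st}$ for $e=\{s,t\}$. *)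

From HB Require Import structures.
From mathcomp Require Import all_boot all_order all_algebra.
From mathcomp Require Import reals.
From Stdlib Require Import ClassicalEpsilon.
Set Implicit Arguments. Unset Strict Implicit. Unset Printing Implicit Defensive.
Import Order.TTheory GRing.Theory Num.Theory.
Local Open Scope ring_scope.

Section Graph.
Variable R : realType.
Variables (n m : nat).
Variables (src tgt : 'I_m -> 'I_n) (w : 'I_m -> R).

(* Moore-Penrose pseudoinverse: the (unique) X satisfying the Penrose equations. *)
Definition is_pinv (k : nat) (A X : 'M[R]_k) : Prop :=
  [/\ A *m X *m A = A, X *m A *m X = X,
      (A *m X)^T = A *m X & (X *m A)^T = X *m A].

Definition pinv (k : nat) (A : 'M[R]_k) : 'M[R]_k :=
  epsilon (inhabits 0) (is_pinv A).

Definition boundary : 'M[R]_(n, m) :=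
  \matrix_(i, e) ((i == src e)%:R - (i == tgt e)%:R).

Definition Wmx : 'M[R]_m := diag_mx (\row_e w e).

Definition laplacian : 'M[R]_n := boundary *m Wmx *m boundary^T.

Definition Lpinv : 'M[R]_n := pinv laplacian.

Definition chi (s t : 'I_n) : 'cV[R]_n := \col_i ((i == s)%:R - (i == t)%:R).

Definition eflow (s t : 'I_n) : 'cV[R]_m :=
  Wmx *m boundary^T *m Lpinv *m chi s t.

Definition biharm (s t : 'I_n) : R :=
  Num.sqrt (((chi s t)^T *m (Lpinv *m Lpinv) *m chi s t) 0 0).

Definition biharm_e (e : 'I_m) : R := biharm (src e) (tgt e).

Definition adj : rel 'I_n := fun u v =>
  [exists e, ((src e == u) && (tgt e == v)) || ((src e == v) && (tgt e == u))].

Definition connected_graph : Prop := forall u v : 'I_n, connect adj u v.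

Definition simple_graph : Prop :=
  (forall e, src e != tgt e) /\
  (forall e e', ((src e == src e') && (tgt e == tgt e')) ||
                ((src e == tgt e') && (tgt e == src e')) -> e = e').
End Graph.

From HB Require Import structures.
From mathcomp Require Import all_boot all_order all_algebra.
From mathcomp Require Import reals.
From mathcomp Require Import ring.
From Stdlib Require Import ClassicalEpsilon.
Import Order.TTheory GRing.Theory Num.Theory.
Local Open Scope ring_scope.

(* Let b be the column of e in the boundary matrix and x := L^+ b.  As L^+ is
   symmetric, f_st(e) = w_e (x_s - x_t) and B_e^2 = |x|^2; as L 1 = 0, the
   Penrose equations force 1^T L^+ = 0, so the entries of x sum to zero, and
   then sum_{s<t} (x_s - x_t)^2 = n |x|^2.  The pseudoinverse exists because
   L^+ = (L + J/n)^-1 - J/n with J the all-ones matrix; connectivity enters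
   only here, making the kernel of L the constants so that L + J/n is
   invertible. *)

Lemma sum_pairs_sym (V : nmodType) k (f : 'I_k -> 'I_k -> V) :
  (forall s t, f s t = f t s) -> (forall s, f s s = 0) ->
  \sum_(s < k) \sum_(t < k) f s t = (\sum_(s < k) \sum_(t < k | (s < t)%N) f s t) *+ 2.
Proof.
move=> fC f0.
have split_row s :
    \sum_(t < k) f s t =
    \sum_(t < k | (s < t)%N) f s t + \sum_(t < k | (t < s)%N) f s t.
  rewrite (bigID (fun t : 'I_k => (s < t)%N)) /=; congr (_ + _).
  rewrite (bigD1 s) ?ltnn //= f0 add0r; apply: eq_bigl => t.
  by rewrite -leqNgt andbC -ltn_neqAle.
rewrite (eq_bigr _ (fun s _ => split_row s)) big_split /= mulr2n; congr (_ + _).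
rewrite (exchange_big_dep xpredT) //=; apply: eq_bigr => s _.
by apply: eq_bigr => t _; rewrite fC.
Qed.

Lemma sum_pairs_sqr_sub {R : numFieldType} {k} {x : 'I_k -> R} :
  \sum_i x i = 0 ->
  \sum_(s < k) \sum_(t < k | (s < t)%N) (x s - x t) ^+ 2 = k%:R * \sum_i x i ^+ 2.
Proof.
move=> x_sum0; apply/eqP; rewrite -(orFb (_ == _)) -(eqrMn2r 2) -sum_pairs_sym;
  last 2 first.
- by move=> s t; rewrite -sqrrN opprB.
- by move=> s; rewrite subrr expr0n.
have row_sum s : \sum_(t < k) (x s - x t) ^+ 2 = k%:R * x s ^+ 2 + \sum_i x i ^+ 2.
  under eq_bigr => t _ do rewrite sqrrB.
  rewrite !big_split /= sumrN sumrMnl -[\sum_(t < k) x s * x t]mulr_sumr x_sum0.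
  by rewrite mulr0 mul0rn subr0 sumr_const card_ord mulr_natl.
rewrite (eq_bigr _ (fun s _ => row_sum s)) big_split /= -mulr_sumr sumr_const card_ord.
by rewrite mulr_natl mulr2n.
Qed.

Lemma sum_indicator (R : pzSemiRingType) (I : finType) (s : I) :
  \sum_i (i == s)%:R = 1 :> R.
Proof. by rewrite (bigD1 s) //= eqxx big1 ?addr0 // => i /negbTE ->. Qed.

Lemma sum_mul_indicator (R : pzSemiRingType) (I : finType) (F : I -> R) (s : I) :
  \sum_i F i * (i == s)%:R = F s.
Proof.
by rewrite (bigD1 s) //= eqxx mulr1 big1 ?addr0 // => i /negbTE ->; rewrite mulr0.
Qed.

Section PseudoInverse.
Context {R : realType} {k : nat}.
Implicit Types A X Y : 'M[R]_k.

Lemma is_pinv_uniq {A X Y} : is_pinv A X -> is_pinv A Y -> X = Y.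
Proof.
case=> [AXA XAX AXs XAs] [AYA YAY AYs YAs].
have X_AY : X = X *m A *m Y.
  have XXA : X = X *m X^T *m A^T by rewrite -{1}XAX -mulmxA -AXs trmx_mul mulmxA.
  have AYA' : A^T = A^T *m (A *m Y) by rewrite -{1}AYA trmx_mul AYs.
  rewrite {1}XXA AYA' !mulmxA -[X *m X^T *m A^T]mulmxA -trmx_mul AXs.
  by rewrite !mulmxA XAX.
have Y_XA : Y = X *m A *m Y.
  have YAY' : Y = A^T *m Y^T *m Y by rewrite -{1}YAY -YAs trmx_mul.
  have AXA' : A^T = X *m A *m A^T by rewrite -{1}AXA -mulmxA trmx_mul XAs.
  rewrite {1}YAY' AXA' -[X *m A *m A^T *m Y^T]mulmxA -trmx_mul YAs.
  by rewrite -!mulmxA [Y *m (A *m Y)]mulmxA YAY.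
by rewrite X_AY -Y_XA.
Qed.

Lemma pinvE {A X} : is_pinv A X -> pinv A = X.
Proof. by move=> AX; apply: esym (is_pinv_uniq AX _); apply: epsilon_spec; exists X. Qed.

Lemma is_pinv_tr {A X} : is_pinv A X -> is_pinv A^T X^T.
Proof.
case=> AXA XAX AXs XAs; split.
- by rewrite -!trmx_mul mulmxA AXA.
- by rewrite -!trmx_mul mulmxA XAX.
- by rewrite -trmx_mul XAs.
- by rewrite -trmx_mul AXs.
Qed.

Lemma is_pinv_sym {A X} : A^T = A -> is_pinv A X -> X^T = X.
Proof.
by move=> symA AX; apply: esym (is_pinv_uniq AX _); rewrite -{1}symA; apply: is_pinv_tr.
Qed.

Lemma is_pinv_ker {p A X} {U : 'M[R]_(k, p)} :
  is_pinv A X -> A *m U = 0 -> U^T *m X = 0.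
Proof.
case=> _ XAX _ XAs AU0.
rewrite -XAX !mulmxA -[U^T *m X *m A]mulmxA -XAs trmx_mul mulmxA -trmx_mul.
by rewrite AU0 trmx0 !mul0mx.
Qed.

Local Notation J := (const_mx 1 : 'M[R]_k).
Local Notation c := (k%:R^-1 : R).

Lemma scale_ones_mul_ones : (0 < k)%N -> c *: (J *m J) = J.
Proof.
move=> k_gt0; have -> : J *m J = k%:R *: J.
  apply/matrixP => i j; rewrite !mxE.
  under eq_bigr => l _ do rewrite !mxE mulr1.
  by rewrite sumr_const card_ord mulr1.
by rewrite scalerA mulVf ?scale1r // pnatr_eq0 -lt0n.
Qed.

Lemma shift_ones_mul_ones {A} : (0 < k)%N -> A *m J = 0 -> (A + c *: J) *m J = J.
Proof.
by move=> k_gt0 AJ0; rewrite mulmxDl AJ0 add0r -scalemxAl scale_ones_mul_ones.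
Qed.

Lemma ones_mul_shift_ones {A} : (0 < k)%N -> J *m A = 0 -> J *m (A + c *: J) = J.
Proof.
by move=> k_gt0 JA0; rewrite mulmxDr JA0 add0r -scalemxAr scale_ones_mul_ones.
Qed.

Lemma is_pinv_shift_ones {A} :
  (0 < k)%N -> A^T = A -> A *m J = 0 -> A + c *: J \in unitmx ->
  is_pinv A (invmx (A + c *: J) - c *: J).
Proof.
set M := A + c *: J => k_gt0 symA AJ0 M_unit.
have JA0 : J *m A = 0 by apply: trmx_inj; rewrite trmx_mul symA trmx_const AJ0 trmx0.
have JiM : J *m invmx M = J by rewrite -{1}(ones_mul_shift_ones k_gt0 JA0) mulmxK.
have iMJ : invmx M *m J = J by rewrite -{1}(shift_ones_mul_ones k_gt0 AJ0) mulKmx.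
have AP : A *m (invmx M - c *: J) = 1%:M - c *: J.
  rewrite mulmxBr -scalemxAr AJ0 scaler0 subr0 -[A](addrK (c *: J)).
  by rewrite mulmxBl mulmxV // -scalemxAl JiM.
have PA : (invmx M - c *: J) *m A = 1%:M - c *: J.
  rewrite mulmxBl -scalemxAl JA0 scaler0 subr0 -[A](addrK (c *: J)).
  by rewrite mulmxBr mulVmx // -scalemxAr iMJ.
have symP : (1%:M - c *: J)^T = 1%:M - c *: J.
  by rewrite raddfB /= trmx1 linearZ /= trmx_const.
split; rewrite ?AP ?PA //.
- by rewrite mulmxBl mul1mx -scalemxAl JA0 scaler0 subr0.
- rewrite mulmxBl mul1mx -scalemxAl mulmxBr JiM -scalemxAr.
  by rewrite scale_ones_mul_ones // subrr scaler0 subr0.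
Qed.

End PseudoInverse.

Definition edge_potential {R : realType} {n m : nat} (src tgt : 'I_m -> 'I_n)
    (w : 'I_m -> R) (e : 'I_m) : 'cV[R]_n :=
  Lpinv src tgt w *m col e (boundary R src tgt).

Section Laplacian.
Context {R : realType} {n m : nat} {src tgt : 'I_m -> 'I_n} {w : 'I_m -> R}.

Local Notation B := (boundary R src tgt).
Local Notation W := (Wmx w).
Local Notation L := (laplacian src tgt w).
Local Notation J := (const_mx 1 : 'M[R]_n).

Lemma tr_laplacian : L^T = L.
Proof. by rewrite /laplacian !trmx_mul trmxK /Wmx tr_diag_mx mulmxA. Qed.

Lemma tr_boundary_mul_ones : B^T *m J = 0.
Proof.
apply/matrixP => e j; rewrite !mxE.
under eq_bigr => i _ do rewrite !mxE mulr1.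
by rewrite sumrB !sum_indicator subrr.
Qed.

Lemma laplacian_mul_ones : L *m J = 0.
Proof. by rewrite /laplacian -mulmxA tr_boundary_mul_ones mulmx0. Qed.

Lemma row_mul_boundary (v : 'rV[R]_n) e :
  (v *m B) 0 e = v 0 (src e) - v 0 (tgt e).
Proof.
rewrite mxE; under eq_bigr => i _ do rewrite mxE mulrBr.
by rewrite sumrB !sum_mul_indicator.
Qed.

Lemma laplacian_form (v : 'rV[R]_n) :
  (v *m L *m v^T) 0 0 = \sum_e w e * (v 0 (src e) - v 0 (tgt e)) ^+ 2.
Proof.
have -> : v *m L *m v^T = v *m B *m W *m (v *m B)^T.
  by rewrite /laplacian trmx_mul !mulmxA.
rewrite /Wmx mul_mx_diag mxE; apply: eq_bigr => e _.
by rewrite mxE [_^T _ _]mxE [(\row_ _ _) _ _]mxE row_mul_boundary mulrAC mulrC expr2.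
Qed.

Hypotheses (w_gt0 : forall e, 0 < w e) (conn : connected_graph src tgt).

Lemma laplacian_ker_const {v : 'rV[R]_n} : v *m L = 0 -> forall x y, v 0 x = v 0 y.
Proof.
move=> vL0 x y.
have edge_eq e : v 0 (src e) = v 0 (tgt e).
  have form0 : \sum_e w e * (v 0 (src e) - v 0 (tgt e)) ^+ 2 = 0.
    by rewrite -laplacian_form vL0 mul0mx mxE.
  have term_ge0 e' : 0 <= w e' * (v 0 (src e') - v 0 (tgt e')) ^+ 2.
    by rewrite mulr_ge0 ?sqr_ge0 ?ltW.
  have := psumr_eq0P (fun e' _ => term_ge0 e') form0 (i := e) isT.
  by move/eqP; rewrite mulf_eq0 gt_eqF //= sqrf_eq0 subr_eq0 => /eqP.
have const_from a b : connect (adj src tgt) a b -> v 0 a = v 0 b.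
  case/connectP => p + ->; elim: p a => [//|c p IHp] a /= /andP [ac cp].
  rewrite -(IHp c cp); case/existsP: ac => e.
  by case/orP => /andP [/eqP <- /eqP <-]; rewrite edge_eq.
by rewrite (const_from _ _ (conn x y)).
Qed.

Lemma laplacian_shift_unit : (0 < n)%N -> L + n%:R^-1 *: J \in unitmx.
Proof.
move=> n_gt0; rewrite -row_free_unit -kermx_eq0; apply/rowV0P => v /sub_kermxP vM0.
have vJ0 : v *m J = 0.
  by rewrite -(shift_ones_mul_ones n_gt0 laplacian_mul_ones) mulmxA vM0 mul0mx.
have vL0 : v *m L = 0 by move: vM0; rewrite mulmxDr -scalemxAr vJ0 scaler0 addr0.
apply/rowP => x; rewrite mxE.
have := congr1 (fun u : 'rV_n => u 0 x) vJ0; rewrite !mxE.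
under eq_bigr => i _ do rewrite mxE mulr1 (laplacian_ker_const vL0 i x).
by rewrite sumr_const card_ord => /eqP; rewrite mulrn_eq0 gtn_eqF //= => /eqP.
Qed.

Lemma is_pinv_Lpinv : (0 < n)%N -> is_pinv L (Lpinv src tgt w).
Proof.
move=> n_gt0; have L_pinv := is_pinv_shift_ones n_gt0 tr_laplacian
  laplacian_mul_ones (laplacian_shift_unit n_gt0).
by rewrite /Lpinv (pinvE L_pinv).
Qed.

Variable e : 'I_m.

Let n_gt0 : (0 < n)%N := leq_ltn_trans (leq0n _) (ltn_ord (src e)).
Local Notation X := (Lpinv src tgt w).
Local Notation x := (edge_potential src tgt w e).

Lemma tr_Lpinv : X^T = X.
Proof. exact: is_pinv_sym tr_laplacian (is_pinv_Lpinv n_gt0). Qed.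

Lemma chi_edge : chi R (src e) (tgt e) = col e B.
Proof. by apply/matrixP => i j; rewrite !mxE. Qed.

Lemma eflow_edge s t : eflow src tgt w s t e 0 = w e * (x s 0 - x t 0).
Proof.
rewrite /eflow /Wmx -!mulmxA mul_diag_mx mxE mxE; congr (_ * _).
have -> : (B^T *m (X *m chi R s t)) e 0 = (x^T *m chi R s t) 0 0.
  by rewrite /edge_potential trmx_mul tr_Lpinv -mulmxA tr_col -row_mul [RHS]mxE.
rewrite mxE; under eq_bigr => i _ do rewrite [_^T _ _]mxE [chi _ _ _ _ _]mxE mulrBr.
by rewrite sumrB !sum_mul_indicator.
Qed.

Lemma biharm_e_sqr : biharm_e src tgt w e ^+ 2 = \sum_i x i 0 ^+ 2.
Proof.
rewrite /biharm_e /biharm chi_edge.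
have -> : (col e B)^T *m (X *m X) *m col e B = x^T *m x.
  by rewrite /edge_potential trmx_mul tr_Lpinv !mulmxA.
rewrite sqr_sqrtr mxE; first by apply: eq_bigr => i _; rewrite [_^T _ _]mxE expr2.
by apply: sumr_ge0 => i _; rewrite [_^T _ _]mxE -expr2 sqr_ge0.
Qed.

Lemma sum_edge_potential : \sum_i x i 0 = 0.
Proof.
have JX0 : J^T *m X = 0 := is_pinv_ker (is_pinv_Lpinv n_gt0) laplacian_mul_ones.
have := congr1 (fun u : 'cV_n => u (src e) 0) (congr1 (mulmx^~ (col e B)) JX0).
rewrite /= mul0mx -mulmxA trmx_const !mxE => sum0.
rewrite -[RHS]sum0; apply: eq_bigr => i _.
by rewrite [const_mx _ _ _]mxE mul1r.
Qed.

End Laplacian.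

Theorem theorem4p1 (R : realType) (n m : nat) (src tgt : 'I_m -> 'I_n)
  (w : 'I_m -> R) :
  (forall e, 0 < w e) ->
  simple_graph src tgt ->
  connected_graph src tgt ->
  forall e : 'I_m,
    n%:R * w e * (biharm_e src tgt w e) ^+ 2 =
    \sum_(s < n) \sum_(t < n | (s < t)%N)
       ((eflow src tgt w s t) e 0) ^+ 2 / w e.
Proof.
move=> w_gt0 _ conn e; set x := edge_potential src tgt w e.
have flow_term s t : (eflow src tgt w s t e 0) ^+ 2 / w e = w e * (x s 0 - x t 0) ^+ 2.
  by rewrite (eflow_edge w_gt0 conn); field; rewrite gt_eqF.
under eq_bigr => s _ do under eq_bigr => t _ do rewrite flow_term.
under eq_bigr => s _ do rewrite -mulr_sumr.
rewrite -mulr_sumr (sum_pairs_sqr_sub (sum_edge_potential w_gt0 conn e)).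
by rewrite (biharm_e_sqr w_gt0 conn) mulrCA mulrA.
Qed.
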